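(* Let $\mathcal B$ be a chordal building set on a finite set $S\subset\mathbb N$ of even cardinality $2k$ with no connected component of odd cardinality. Then the map sending an alternating $\mathcal B$-permutation $(x_1x_2\cdots x_{2k})$ to the chain $(\emptyset,\{x_1,x_2\},\{x_1,\dots,x_4\},\dots,\{x_1,\dots,x_{2k}\})$ is a bijection from the set of alternating $\mathcal B$-permutations onto the set of maximal chains of $\widehat{\mathcal P}_{\mathcal B}$ that have no decreasing position (with respect to $\mu_{\mathcal B}$).
   Context: A building set on a finite set $S\subset\mathbb N$ is a collection $\mathcal B$ of nonempty subsets of $S$ containing every singleton $\{i\}$, $i\in S$, such that $I,J\in\mathcal B$ and $I\cap J\neq\emptyset$ imply $I\cup J\in\mathcal B$. Its connected components are the inclusion-maximal elements of $\mathcal B$. For $I\subseteq S$, $\mathcal B|_I=\{J\in\mathcal B:J\subseteq I\}$. $\mathcal B$ is chordal if for every $I=\{i_1<\dots<i_r\}\in\mathcal B$ and every $1<s<r$, $\{i_s,\dots,i_r\}\in\mathcal B$. For a building set $\mathcal B$ on $S$ with $|S|=m$, a $\mathcal B$-permutation is a sequence $(x_1x_2\cdots x_m)$ listing each element of $S$ exactly once such that for each $1\le i\le m$, $x_i$ and $\max\{x_1,\dots,x_i\}$ lie in the same connected component of $\mathcal B|_{\{x_1,\dots,x_i\}}$. It is alternating if $x_1>x_2<x_3>x_4<\cdots$. $\widehat{\mathcal P}_{\mathcal B}=\{I\subseteq S:\ \mathcal B|_I\text{ has no connected component of odd cardinality}\}$, ordered by inclusion; its maximal chains have the form $\emptyset=I_0\subset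 I_1\subset\dots\subset I_k=S$ with $|I_i|=2i$. For a covering pair $I_1\subset I_2$ ($|I_2|=|I_1|+2$), $I_2\setminus I_1$ lies in a single connected component of $\mathcal B|_{I_2}$, denoted $\mathfrak C(I_2;I_1)$. On $\Omega=\mathbb Z\times\mathbb Z$ define $(a_1,a_2)\ge(b_1,b_2)$ iff either $a_1\ge a_2\ge b_1\ge b_2$ or $a_1=b_1\ge a_2\ge b_2$. On $\mathbb Z\times\Omega$ define $(x,\alpha)\succeq(y,\beta)$ iff $x>y$, or $x=y$ and $\alpha\ge\beta$; $\succ$ means $\succeq$ and $\neq$. Set $\mu_{\mathcal B}(I_1,I_2)=\bigl(\max\mathfrak C(I_2;I_1),(\max(I_2\setminus I_1),\min(I_2\setminus I_1))\bigr)$ for covering pairs. A maximal chain $(I_0,\dots,I_k)$ has a decreasing position at $1\le i<k$ if $\mu_{\mathcal B}(I_{i-1},I_i)\succ\mu_{\mathcal B}(I_i,I_{i+1})$. *)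

From mathcomp Require Import all_boot all_order.
From mathcomp Require Import finmap.
Set Implicit Arguments. Unset Strict Implicit. Unset Printing Implicit Defensive.
Local Open Scope fset_scope.

Definition building_set (S : {fset nat}) (B : {fset {fset nat}}) : Prop :=
  (forall I, I \in B -> I != fset0 /\ I `<=` S) /\
  (forall i, i \in S -> [fset i] \in B) /\
  (forall I J, I \in B -> J \in B -> I `&` J != fset0 -> I `|` J \in B).

Definition restr (B : {fset {fset nat}}) (I : {fset nat}) : {fset {fset nat}} :=
  [fset J in B | J `<=` I].

(* connected components of B|_I : inclusion-maximal elements *)
Definition comps (B : {fset {fset nat}}) (I : {fset nat}) : {fset {fset nat}} :=
  [fset C in restr B I | all (fun K => (C `<=` K) ==> (K == C)) (restr B I)].

Definition chordal (B : {fset {fset nat}}) : Prop :=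
  forall I, I \in B -> forall s, 0 < s -> s < (#|` I|).-1 ->
    [fset x in drop s (sort leq I)] \in B.

Definition same_comp (B : {fset {fset nat}}) (I : {fset nat}) (x y : nat) : bool :=
  has (fun C => (x \in C) && (y \in C)) (comps B I).

Definition smax (s : seq nat) : nat := \max_(x <- s) x.
Definition smin (s : seq nat) : nat := head 0 (sort leq s).

Definition B_perm (S : {fset nat}) (B : {fset {fset nat}}) (xs : seq nat) : Prop :=
  perm_eq xs S /\
  forall i, 0 < i <= size xs ->
    same_comp B [fset x in take i xs] (nth 0 xs i.-1) (smax (take i xs)).

(* alternating: x1 > x2 < x3 > x4 < ... (0-indexed positions j, j+1) *)
Definition alternating (xs : seq nat) : Prop :=
  forall j, j.+1 < size xs ->
    if odd j then nth 0 xs j < nth 0 xs j.+1 else nth 0 xs j > nth 0 xs j.+1.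

Definition Phat (S : {fset nat}) (B : {fset {fset nat}}) (I : {fset nat}) : bool :=
  (I `<=` S) && all (fun C => ~~ odd #|` C|) (comps B I).

Definition max_chain (S : {fset nat}) (B : {fset {fset nat}}) (c : seq {fset nat}) : Prop :=
  all (Phat S B) c /\ sorted (fun X Y => X `<` Y) c /\
  (forall X, Phat S B X -> all (fun Y => (X `<=` Y) || (Y `<=` X)) c -> X \in c).

(* C(I2; I1): the connected component of B|_{I2} containing I2 \ I1 *)
Definition frakC (B : {fset {fset nat}}) (I1 I2 : {fset nat}) : {fset nat} :=
  head fset0 [seq C <- comps B I2 | (I2 `\` I1) `<=` C].

Definition ge_Om (a b : nat * nat) : bool :=
  [&& a.1 >= a.2, a.2 >= b.1 & b.1 >= b.2] || [&& a.1 == b.1, a.2 >= b.2 & b.1 >= b.2].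
Definition geZOm (a b : nat * (nat * nat)) : bool :=
  (a.1 > b.1) || ((a.1 == b.1) && ge_Om a.2 b.2).
Definition gtZOm (a b : nat * (nat * nat)) : bool := geZOm a b && (a != b).

Definition mu (B : {fset {fset nat}}) (I1 I2 : {fset nat}) : nat * (nat * nat) :=
  (smax (frakC B I1 I2), (smax (I2 `\` I1), smin (I2 `\` I1))).

Definition no_decreasing (B : {fset {fset nat}}) (c : seq {fset nat}) : Prop :=
  forall i, 0 < i -> i.+1 < size c ->
    ~~ gtZOm (mu B (nth fset0 c i.-1) (nth fset0 c i)) (mu B (nth fset0 c i) (nth fset0 c i.+1)).

Definition perm_to_chain (xs : seq nat) : seq {fset nat} :=
  [seq [fset x in take (2 * i) xs] | i <- iota 0 (size xs)./2.+1].

From mathcomp Require Import all_boot all_order.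
From mathcomp Require Import finmap.
From mathcomp Require Import zify.
Set Implicit Arguments. Unset Strict Implicit. Unset Printing Implicit Defensive.
Local Open Scope fset_scope.

(* For X in the poset, every component of B|_{X ∪ {a,b}} meets X evenly, so
   X ∪ {a,b} is again in the poset exactly when a and b lie in one component;
   chordality shows that elements of the poset differing by four or more points
   are never consecutive, so maximal chains grow by two points at a time.
   An alternating B-permutation therefore gives a maximal chain whose labels
   are (M_i, (x_{2i}, x_{2i+1})), with M_i the running maximum of the prefixes;
   as M_i is non-decreasing and x_{2i+1} < x_{2i+2}, no position decreases.
   Conversely, a chain without decreasing positions is read back by
   x_{2i} = max (I_{i+1} \ I_i) and x_{2i+1} = min (I_{i+1} \ I_i): the
   condition forces the component of each new pair to contain the running
   maximum and x_{2i+1} < x_{2i+2}, and the part of that component above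
   x_{2i+1}, which is in B by chordality, yields the B-permutation condition at
   odd prefixes. *)

Section Components.
Variables (S : {fset nat}) (B : {fset {fset nat}}).
Hypothesis hB : building_set S B.

Lemma mem_restr J I : (J \in restr B I) = (J \in B) && (J `<=` I).
Proof. by rewrite !inE. Qed.

Lemma mem_comps C I : C \in comps B I =
  (C \in restr B I) && all (fun K => (C `<=` K) ==> (K == C)) (restr B I).
Proof. by rewrite in_fset. Qed.

Lemma compsP C I : C \in comps B I ->
  [/\ C \in B, C `<=` I & forall K, K \in B -> K `<=` I -> C `<=` K -> K = C].
Proof.
rewrite mem_comps mem_restr => /andP[/andP[CB CI] /allP maxC]; split=> // K KB KI CK.
by apply/eqP; have := maxC K; rewrite mem_restr KB KI CK => /(_ isT).
Qed.

Lemma comps_sup K I : K \in B -> K `<=` I -> exists2 C, C \in comps B I & K `<=` C.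
Proof.
move=> KB KI; have [n] := ubnP (#|` I| - #|` K|).
elim: n K KB KI => [//|n IH] K KB KI ltn.
have [KC|] := boolP (K \in comps B I); first by exists K.
rewrite mem_comps mem_restr KB KI /= => /allPn[J]; rewrite mem_restr => /andP[JB JI].
rewrite negb_imply => /andP[KJ nJK].
have ltKJ : #|` K| < #|` J|.
  by rewrite fproper_ltn_card // fproperEneq KJ andbT eq_sym.
have [C CI JC] : exists2 C, C \in comps B I & J `<=` C.
  by apply: IH => //; have := fsubset_leq_card JI; lia.
by exists C => //; apply: fsubset_trans JC.
Qed.

Lemma comps_eq I C1 C2 x : C1 \in comps B I -> C2 \in comps B I ->
  x \in C1 -> x \in C2 -> C1 = C2.
Proof.
case: hB => _ [_ unionB] /compsP[B1 I1 max1] /compsP[B2 I2 max2] x1 x2.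
have meet : C1 `&` C2 != fset0 by apply/fset0Pn; exists x; rewrite inE x1 x2.
have UB := unionB _ _ B1 B2 meet.
have UI : C1 `|` C2 `<=` I by rewrite fsubUset I1 I2.
by rewrite -(max1 _ UB UI (fsubsetUl _ _)) (max2 _ UB UI (fsubsetUr _ _)).
Qed.

Lemma comps_mem I x : I `<=` S -> x \in I -> exists2 C, C \in comps B I & x \in C.
Proof.
case: hB => _ [singB _] IS xI.
have xI' : [fset x] `<=` I by rewrite fsub1set.
by have [C CC] := comps_sup (singB x (fsubsetP IS x xI)) xI'; rewrite fsub1set; exists C.
Qed.

Lemma same_compP I x y :
  reflect (exists2 C, C \in comps B I & (x \in C) && (y \in C)) (same_comp B I x y).
Proof. exact: hasP. Qed.

Lemma same_comp_of_mem I K x y :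
  K \in B -> K `<=` I -> x \in K -> y \in K -> same_comp B I x y.
Proof.
move=> KB KI xK yK; have [C CC KC] := comps_sup KB KI.
by apply/same_compP; exists C; rewrite ?(fsubsetP KC _ xK) ?(fsubsetP KC _ yK).
Qed.

Lemma same_comp_subset X Y x y : X `<=` Y -> same_comp B X x y -> same_comp B Y x y.
Proof.
move=> XY /same_compP[C /compsP[CB CX _] /andP[xC yC]].
exact: (same_comp_of_mem CB (fsubset_trans CX XY)).
Qed.

Lemma same_comp_sym I x y : same_comp B I x y -> same_comp B I y x.
Proof. by case/same_compP=> C CC /andP[xC yC]; apply/same_compP; exists C; rewrite ?xC ?yC. Qed.

Lemma same_comp_trans I x y z :
  same_comp B I x y -> same_comp B I y z -> same_comp B I x z.
Proof.
case/same_compP=> [C1 C1I /andP[x1 y1]] /same_compP[C2 C2I /andP[y2 z2]].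
rewrite (comps_eq C1I C2I y1 y2) in x1.
by apply/same_compP; exists C2; rewrite ?x1 ?z2.
Qed.

Lemma PhatP I :
  reflect (I `<=` S /\ forall C, C \in comps B I -> ~~ odd #|` C|) (Phat S B I).
Proof.
rewrite /Phat; case: (I `<=` S); last by constructor; case.
have [evenC|oddC] := @allP _ (fun C : {fset nat} => ~~ odd #|` C|) (comps B I).
  by constructor.
by constructor=> -[_ evenC]; apply: oddC => C /evenC.
Qed.

Lemma Phat_fset0 : Phat S B fset0.
Proof.
apply/PhatP; split=> [|C /compsP[CB C0 _]]; first exact: fsub0set.
by case: hB => /(_ C CB) [+ _] _; rewrite -fsubset0 C0.
Qed.


End Components.

Section Parity.
Variables (S : {fset nat}) (B : {fset {fset nat}}).
Hypothesis hB : building_set S B.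

Lemma even_card_comps_closed (X U : {fset nat}) : Phat S B X -> U `<=` X ->
  (forall C, C \in comps B X -> C `&` U != fset0 -> C `<=` U) -> ~~ odd #|` U|.
Proof.
move=> /PhatP[XS evenC]; have [n] := ubnP #|` U|.
elim: n U => [//|n IH] U ltUn UX closedU.
have [->|/fset0Pn[x xU]] := eqVneq U fset0; first by rewrite cardfs0.
have [C CX xC] := comps_mem hB XS (fsubsetP UX x xU).
have CU : C `<=` U by apply: closedU => //; apply/fset0Pn; exists x; rewrite inE xC.
have evenUC : ~~ odd #|` U `\` C|.
  apply: IH; last 1 first.
  - move=> C' C'X /fset0Pn[y]; rewrite !inE => /and3P[yC' yC yU].
    have C'U : C' `<=` U by apply: closedU => //; apply/fset0Pn; exists y; rewrite inE yC'.
    apply/fsubsetP => z zC'; rewrite !inE (fsubsetP C'U z zC') andbT.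
    by apply: contraNN yC => zC; rewrite -(comps_eq hB C'X CX zC' zC).
  - rewrite cardfsDS //; have : 0 < #|` C| by rewrite cardfs_gt0; apply/fset0Pn; exists x.
    by move: ltUn; have := fsubset_leq_card CU; lia.
  by apply: fsubset_trans UX; apply: fsubsetDl.
by rewrite -(cardfsID C) (fsetIidPr CU) oddD (negbTE evenUC) (negbTE (evenC C CX)).
Qed.

Lemma Phat_even (X : {fset nat}) : Phat S B X -> ~~ odd #|` X|.
Proof. by move=> PX; apply: (even_card_comps_closed PX) => // C /compsP[]. Qed.

Lemma even_card_comps_cap (X Y C : {fset nat}) : Phat S B X -> X `<=` Y -> C \in comps B Y ->
  ~~ odd #|` C `&` X|.
Proof.
move=> PX XY CY; apply: (even_card_comps_closed PX); first exact: fsubsetIr.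
move=> C' C'X /fset0Pn[x]; rewrite !inE => /and3P[xC' xC xX].
have [C'B C'sub _] := compsP C'X.
have [D DY C'D] := comps_sup C'B (fsubset_trans C'sub XY).
have eDC := comps_eq hB DY CY (fsubsetP C'D x xC') xC.
apply/fsubsetP => z zC'; rewrite inE (fsubsetP C'sub z zC') andbT.
by rewrite -eDC (fsubsetP C'D z zC').
Qed.

Lemma card_fsetD_add2 (X C : {fset nat}) (a b : nat) : a \notin X -> b \notin X -> a != b ->
  C `<=` X `|` [fset a; b] -> #|` C `\` X| = ((a \in C) + (b \in C))%N.
Proof.
move=> aX bX ab CXab; rewrite (cardfsD1 a) (cardfsD1 b).
have -> : C `\` X `\ a `\ b = fset0.
  apply/fsetP => z; rewrite !inE; apply/negP => /and4P[zb za zX zC].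
  by move: (fsubsetP CXab z zC); rewrite !inE (negbTE zX) (negbTE za) (negbTE zb).
by rewrite cardfs0 addn0 !inE (negbTE aX) (negbTE bX) eq_sym ab.
Qed.

Lemma Phat_add2 (X : {fset nat}) (a b : nat) : Phat S B X -> a \notin X -> b \notin X -> a != b ->
  X `|` [fset a; b] `<=` S ->
  Phat S B (X `|` [fset a; b]) = same_comp B (X `|` [fset a; b]) a b.
Proof.
move=> PX aX bX ab YS; set Y := X `|` [fset a; b].
have XY : X `<=` Y by apply: fsubsetUl.
have parityC C : C \in comps B Y -> odd #|` C| = odd ((a \in C) + (b \in C)).
  move=> CY; have [_ CsubY _] := compsP CY.
  rewrite -(cardfsID X C) (card_fsetD_add2 aX bX ab CsubY) oddD.
  by rewrite (negbTE (even_card_comps_cap PX XY CY)).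
apply/idP/idP => [/PhatP[_ evenC]|/same_compP[C0 C0Y /andP[aC0 bC0]]].
  have aY : a \in Y by rewrite !inE eqxx orbT.
  have [C CY aC] := comps_mem hB YS aY.
  apply/same_compP; exists C => //; rewrite aC /=.
  by apply: contraNT (evenC C CY) => bC; rewrite parityC // aC (negbTE bC).
apply/PhatP; split=> // C CY; rewrite parityC //.
case aC : (a \in C); case bC : (b \in C) => //.
  by move: bC; rewrite (comps_eq hB CY C0Y aC aC0) bC0.
by move: aC; rewrite (comps_eq hB CY C0Y bC bC0) aC0.
Qed.

End Parity.

Lemma enum_fset_neq0 (D : {fset nat}) x : x \in D -> (D : seq nat) != [::].
Proof.
by move=> xD; rewrite -size_eq0 -lt0n; change (0 < #|` D|); rewrite cardfs_gt0; apply/fset0Pn; exists x.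
Qed.

Lemma leq_smax (s : seq nat) x : x \in s -> x <= smax s.
Proof. by move=> xs; apply: (@leq_bigmax_seq _ s xpredT id x). Qed.

Lemma smax_leq (s : seq nat) m : (forall x, x \in s -> x <= m) -> smax s <= m.
Proof. by move=> sm; apply/bigmax_leqP_seq => x /sm. Qed.

Lemma smax_cons x (s : seq nat) : smax (x :: s) = maxn x (smax s).
Proof. by rewrite /smax big_cons. Qed.

Lemma smax_mem (s : seq nat) : s != [::] -> smax s \in s.
Proof.
elim: s => [//|x [|y s] IH] _; first by rewrite smax_cons /smax big_nil maxn0 inE.
rewrite smax_cons inE; case: (leqP x (smax (y :: s))) => [_|_]; last by rewrite eqxx.
by rewrite IH ?orbT.
Qed.

Lemma eq_smax (s1 s2 : seq nat) : s1 =i s2 -> smax s1 = smax s2.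
Proof.
move=> e12; apply/eqP; rewrite eqn_leq.
by apply/andP; split; apply: smax_leq => x xs; apply: leq_smax; rewrite ?e12 // -e12.
Qed.

Lemma smax_subset (X Y : {fset nat}) : X `<=` Y -> smax X <= smax Y.
Proof. by move=> XY; apply: smax_leq => x xX; apply/leq_smax/(fsubsetP XY). Qed.

Lemma smin_leq (s : seq nat) x : x \in s -> smin s <= x.
Proof.
rewrite /smin -(mem_sort leq).
have : sorted leq (sort leq s) by apply: sort_sorted; exact: leq_total.
case: (sort leq s) => [//|y t] /= sorted_yt; rewrite inE => /orP[/eqP-> //|xt].
by have /allP := order_path_min leq_trans sorted_yt; apply.
Qed.

Lemma smin_mem (s : seq nat) : s != [::] -> smin s \in s.
Proof.
rewrite /smin -(mem_sort leq) -size_eq0 -(size_sort leq) size_eq0.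
by case: (sort leq s) => [//|y t] _; rewrite inE eqxx.
Qed.

Lemma smax_smin_pair (D : {fset nat}) a b :
  (forall x, (x \in D) = (x == a) || (x == b)) -> b < a -> smax D = a /\ smin D = b.
Proof.
move=> Dab ba.
have aD : a \in D by rewrite Dab eqxx.
have bD : b \in D by rewrite Dab eqxx orbT.
have D0 := enum_fset_neq0 aD.
split.
  apply/eqP; rewrite eqn_leq leq_smax // andbT; apply: smax_leq => x.
  by rewrite Dab => /orP[] /eqP-> //; apply: ltnW.
have := smin_mem D0; rewrite Dab => /orP[/eqP minA|/eqP //].
by have := smin_leq bD; rewrite minA leqNgt ba.
Qed.

Lemma card2_smax_smin (D : {fset nat}) : #|` D| = 2 ->
  smin D < smax D /\ forall x, (x \in D) = (x == smax D) || (x == smin D).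
Proof.
move=> D2; have D0 : (D : seq nat) != [::] by rewrite -size_eq0; move: D2 => /= ->.
have [maxD minD] := (smax_mem D0, smin_mem D0).
have [lt|ge] := ltnP (smin D) (smax D); last first.
  have : D `<=` [fset smax D].
    apply/fsubsetP => x xD; rewrite inE eqn_leq leq_smax //=.
    exact: leq_trans ge (smin_leq xD).
  by move/fsubset_leq_card; rewrite cardfs1 D2.
split=> // x; apply/idP/idP => [xD|/orP[]/eqP-> //].
have eD : [fset smax D; smin D] = D.
  apply/eqP; rewrite eqEfcard fsubUset !fsub1set maxD minD cardfs2 D2 /=.
  by rewrite neq_ltn lt orbT.
by move: xD; rewrite -{1}eD !inE.
Qed.

Lemma sorted_drop_count_leq (l : seq nat) b : sorted leq l ->
  drop (count (fun x => x <= b) l) l = filter (fun x => b < x) l.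
Proof.
elim: l => [//|x l IH] /= sorted_xl; have sorted_l := path_sorted sorted_xl.
case: (leqP x b) => [_|bx] /=; first by rewrite add0n IH.
have above : all (fun y => b < y) l.
  apply/allP => y yl; have /allP/(_ y yl) := order_path_min leq_trans sorted_xl.
  exact: leq_trans bx.
have -> : count (fun x => x <= b) l = 0.
  by apply/eqP; rewrite -leqn0 leqNgt -has_count; apply/hasPn => y /(allP above); rewrite -ltnNge.
by rewrite (all_filterP above).
Qed.

Section Chordal.
Variable B : {fset {fset nat}}.
Hypothesis hc : chordal B.

(* The upper part of C is a tail [drop s (sort leq C)] with [0 < s < #|C| - 1]. *)
Lemma chordal_tail (C : {fset nat}) b : C \in B ->
  (exists2 y, y \in C & y <= b) ->
  (exists u v, [/\ u \in C, v \in C, u != v, b < u & b < v]) ->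
  [fset x in C | b < x] \in B.
Proof.
move=> CB [y yC yb] [u [v [uC vC uv bu bv]]].
set l := sort leq C; set s := count (fun x => x <= b) l.
have sorted_l : sorted leq l by apply: sort_sorted; exact: leq_total.
have s0 : 0 < s by rewrite -has_count; apply/hasP; exists y; rewrite ?mem_sort.
have two_above : 2 <= count (fun x => b < x) l.
  rewrite -size_filter (@uniq_leq_size _ [:: u; v]) //= ?inE ?uv // => z.
  by rewrite !inE mem_filter mem_sort => /orP[] /eqP->; rewrite ?uC ?vC ?bu ?bv.
have size_l : (s + count (fun x => b < x) l)%N = #|` C|.
  rewrite -(size_sort leq) -/l -(count_predC (fun x => x <= b) l).
  by congr (_ + _)%N; apply: eq_count => z /=; rewrite ltnNge.
have := hc CB s0; rewrite sorted_drop_count_leq // => tailB.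
have -> : [fset x in C | b < x] = [fset x in [seq x <- l | b < x]].
  by apply/fsetP => z; rewrite !inE mem_filter mem_sort andbC.
by apply: tailB; move: size_l two_above; lia.
Qed.

Lemma chordal_above (C : {fset nat}) n1 n2 : C \in B -> n1 \in C -> n2 \in C -> n2 < n1 ->
  exists T, [/\ T \in B, T `<=` C, n1 \in T, n2 \in T & forall z, z \in T -> n2 <= z].
Proof.
move=> CB n1C n2C n21.
have [/hasP[y yC yn2]|/hasPn noneBelow] := boolP (has (fun y => y < n2) C); last first.
  by exists C; split=> // z /noneBelow; rewrite -leqNgt.
exists [fset x in C | n2.-1 < x]; split.
- apply: chordal_tail => //; first by exists y => //; lia.
  by exists n1, n2; split=> //; [rewrite neq_ltn n21 orbT | lia | lia].
- by apply/fsubsetP => z; rewrite !inE => /andP[].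
- by rewrite !inE n1C; lia.
- by rewrite !inE n2C; lia.
- by move=> z; rewrite !inE => /andP[_]; lia.
Qed.

End Chordal.

Section Covering.
Variables (S : {fset nat}) (B : {fset {fset nat}}).
Hypothesis hB : building_set S B.
Hypothesis hc : chordal B.

Lemma comps_fsetD_partner (X Z C : {fset nat}) n : Phat S B X -> Phat S B Z -> X `<=` Z ->
  C \in comps B Z -> n \in C `\` X -> (C `\` X) `\ n != fset0.
Proof.
move=> PX /PhatP[_ evenZ] XZ CZ nCX; rewrite -cardfs_gt0.
have := evenZ C CZ; rewrite -(cardfsID X C) oddD (negbTE (even_card_comps_cap hB PX XZ CZ)).
by rewrite (cardfsD1 n) nCX /=; case: #|` _|.
Qed.

(* Adding to X the largest new element n1 of Z and the largest element n2 of
   its component which is new as well gives an element of the poset: by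
   chordality, n1 and n2 are joined inside X ∪ {n1, n2}. *)
Lemma Phat_interpolate (X Z : {fset nat}) : Phat S B X -> Phat S B Z -> X `<=` Z ->
  (#|` X| + 4 <= #|` Z|)%N -> exists Y, [/\ Phat S B Y, X `<` Y & Y `<` Z].
Proof.
move=> PX PZ XZ cardXZ; have /PhatP[ZS _] := PZ.
have ZX0 : (Z `\` X : seq nat) != [::].
  by rewrite -size_eq0; change (#|` Z `\` X| != 0); rewrite cardfsDS //; lia.
set n1 := smax (Z `\` X); have := smax_mem ZX0; rewrite -/n1 inE => /andP[n1X n1Z].
have [C CZ n1C] := comps_mem hB ZS n1Z; have [CB CsubZ _] := compsP CZ.
have n1CX : n1 \in C `\` X by rewrite inE n1X.
have /fset0Pn[n2' n2'N] := comps_fsetD_partner PX PZ XZ CZ n1CX.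
set n2 := smax ((C `\` X) `\ n1).
have := smax_mem (enum_fset_neq0 n2'N); rewrite -/n2 !inE => /and3P[n21 n2X n2C].
have n2Z := fsubsetP CsubZ n2 n2C.
have lt21 : n2 < n1.
  by rewrite ltn_neqAle n21 leq_smax // inE n2X n2Z.
have [T [TB TC n1T n2T Tge]] := chordal_above hc CB n1C n2C lt21.
have TY : T `<=` X `|` [fset n1; n2].
  apply/fsubsetP => z zT; rewrite !inE; have [//|zX] /= := boolP (z \in X).
  have [//|zn1] /= := eqVneq z n1; rewrite eqn_leq Tge // andbT.
  by apply: leq_smax; rewrite !inE zn1 zX (fsubsetP TC z zT).
have YZ : X `|` [fset n1; n2] `<=` Z by rewrite fsubUset XZ fsubUset !fsub1set n1Z n2Z.
have n12 : n1 != n2 by rewrite eq_sym.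
exists (X `|` [fset n1; n2]); split.
- rewrite Phat_add2 ?(fsubset_trans YZ ZS) //.
  exact: (same_comp_of_mem TB TY n1T n2T).
- rewrite fproperE fsubsetUl /=; apply/negP => /fsubsetP /(_ n1).
  by rewrite !inE eqxx orbT (negbTE n1X) => /(_ isT).
- rewrite fproperE YZ /=; apply/negP => /fsubset_leq_card.
  have := cardfsUI X [fset n1; n2]; rewrite cardfs2 n12.
  by move: cardXZ; clear; lia.
Qed.

End Covering.

Section Mu.
Variables (S : {fset nat}) (B : {fset {fset nat}}).
Hypothesis hB : building_set S B.

Lemma frakC_eq (X Y C : {fset nat}) z : C \in comps B Y -> z \in Y `\` X ->
  Y `\` X `<=` C -> frakC B X Y = C.
Proof.
move=> CY zYX YXC; rewrite /frakC; set l := filter _ _.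
have Cl : C \in l by rewrite mem_filter YXC CY.
have onlyC C' : C' \in l -> C' = C.
  rewrite mem_filter => /andP[YXC' C'Y].
  exact: (comps_eq hB C'Y CY (fsubsetP YXC' z zYX) (fsubsetP YXC z zYX)).
by case: l Cl onlyC => [//|C' l] _ onlyC /=; apply: onlyC; rewrite inE eqxx.
Qed.

Lemma mu_eq (X Y C : {fset nat}) a b : C \in comps B Y ->
  (forall x, (x \in Y `\` X) = (x == a) || (x == b)) -> b < a -> a \in C -> b \in C ->
  mu B X Y = (smax C, (a, b)).
Proof.
move=> CY YXab ba aC bC; have aYX : a \in Y `\` X by rewrite YXab eqxx.
rewrite /mu; have [-> ->] := smax_smin_pair YXab ba; rewrite (frakC_eq CY aYX) //.
by apply/fsubsetP => x; rewrite YXab => /orP[] /eqP->.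
Qed.

End Mu.

Definition prefix (xs : seq nat) (i : nat) : {fset nat} := [fset x in take i xs].

Lemma prefix0 (xs : seq nat) : prefix xs 0 = fset0.
Proof. by apply/fsetP => z; rewrite /prefix !inE take0. Qed.

Lemma smax_prefix (xs : seq nat) i : smax (prefix xs i) = smax (take i xs).
Proof. by apply: eq_smax => z; rewrite /prefix inE. Qed.

Lemma prefixS (xs : seq nat) i : i < size xs ->
  prefix xs i.+1 = prefix xs i `|` [fset nth 0 xs i].
Proof. by move=> ixs; apply/fsetP => z; rewrite /prefix (take_nth 0 ixs) -cats1 !(inE, mem_cat) orbF. Qed.

Lemma prefixSS (xs : seq nat) i : i.+1 < size xs ->
  prefix xs i.+2 = prefix xs i `|` [fset nth 0 xs i; nth 0 xs i.+1].
Proof. by move=> ixs; rewrite prefixS // prefixS 1?ltnW // -fsetUA. Qed.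

Lemma nth_notin_prefix (xs : seq nat) i j : uniq xs -> i <= j -> j < size xs ->
  nth 0 xs j \notin prefix xs i.
Proof. by move=> xs_uniq ij jxs; rewrite /prefix inE in_take ?mem_nth // index_uniq // -leqNgt. Qed.

Lemma prefix_subset (xs : seq nat) i j : i <= j -> prefix xs i `<=` prefix xs j.
Proof.
move=> ij; apply/fsubsetP => z; rewrite /prefix !inE -(minn_idPl ij) take_min.
exact: mem_take.
Qed.

Lemma card_prefix (xs : seq nat) i : uniq xs -> i <= size xs -> #|` prefix xs i| = i.
Proof.
move=> xs_uniq ixs; rewrite /prefix card_fseq undup_id ?take_uniq //.
by rewrite size_take_min (minn_idPl ixs).
Qed.

Lemma prefix_proper (xs : seq nat) i j : uniq xs -> i < j -> j <= size xs ->
  prefix xs i `<` prefix xs j.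
Proof.
move=> xs_uniq ij jxs; rewrite fproperEcard prefix_subset ?(ltnW ij) //=.
by rewrite !card_prefix // (leq_trans (ltnW ij)).
Qed.

Lemma gtZOm_ascent m1 m2 a1 b1 a2 b2 : m1 <= m2 -> b1 < a2 -> a1 != a2 ->
  ~~ gtZOm (m1, (a1, b1)) (m2, (a2, b2)).
Proof.
move=> m12 ba a12; rewrite /gtZOm /geZOm /ge_Om /= ltnNge m12 /=.
apply/negP => /andP[/andP[_ /orP[/and3P[_ b1a2 _]|/and3P[a1a2 _ _]]] _].
  by move: b1a2; rewrite leqNgt ba.
by move: a12; rewrite a1a2.
Qed.

Lemma fsubset_comparable_eq (T : choiceType) (X Y : {fset T}) :
  (X `<=` Y) || (Y `<=` X) -> #|` X| = #|` Y| -> X = Y.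
Proof.
move=> /orP[XY|YX] cardXY; apply/eqP; first by rewrite eqEfcard XY cardXY /=.
by rewrite eq_sym eqEfcard YX cardXY /=.
Qed.

Lemma mul2nS i : 2 * i.+1 = (2 * i).+2.
Proof. by rewrite !mul2n doubleS. Qed.

Lemma alternating_desc (xs : seq nat) i : alternating xs -> (2 * i).+1 < size xs ->
  nth 0 xs (2 * i).+1 < nth 0 xs (2 * i).
Proof. by move=> alt ixs; have := alt _ ixs; rewrite oddM. Qed.

Lemma alternating_asc (xs : seq nat) i : alternating xs -> (2 * i).+2 < size xs ->
  nth 0 xs (2 * i).+1 < nth 0 xs (2 * i).+2.
Proof. by move=> alt ixs; have := alt _ ixs; rewrite /= oddM. Qed.

Lemma mem_prefix_fsetD2 (xs : seq nat) i : uniq xs -> i.+1 < size xs -> forall x,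
  (x \in prefix xs i.+2 `\` prefix xs i) = (x == nth 0 xs i) || (x == nth 0 xs i.+1).
Proof.
move=> xs_uniq ixs x; rewrite prefixSS // in_fsetD in_fsetU in_fset2.
have [xi|_] //= := boolP (x \in prefix xs i); apply/esym/negbTE.
apply/negP => /orP[] /eqP xE; move: xi; rewrite xE; apply/negP.
  exact: nth_notin_prefix (ltnW ixs).
exact: nth_notin_prefix.
Qed.

Lemma nth_prefix_fsetD2 (xs : seq nat) i : uniq xs -> alternating xs -> (2 * i).+1 < size xs ->
  nth 0 xs (2 * i) = smax (prefix xs (2 * i).+2 `\` prefix xs (2 * i)) /\
  nth 0 xs (2 * i).+1 = smin (prefix xs (2 * i).+2 `\` prefix xs (2 * i)).
Proof.
move=> xs_uniq alt ixs.
by have [-> ->] := smax_smin_pair (mem_prefix_fsetD2 xs_uniq ixs) (alternating_desc alt ixs).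
Qed.

Section Forward.
Variables (S : {fset nat}) (B : {fset {fset nat}}) (k : nat).
Hypothesis hB : building_set S B.
Hypothesis hk : #|` S| = 2 * k.

Lemma Bperm_uniq xs : B_perm S B xs -> uniq xs.
Proof. by case=> xsS _; rewrite (perm_uniq xsS) fset_uniq. Qed.

Lemma Bperm_size xs : B_perm S B xs -> size xs = 2 * k.
Proof. by case=> xsS _; rewrite (perm_size xsS) -hk. Qed.

Lemma Bperm_prefix_subset xs i : B_perm S B xs -> prefix xs i `<=` S.
Proof. by case=> xsS _; apply/fsubsetP => x; rewrite inE => /mem_take; rewrite (perm_mem xsS). Qed.

Lemma perm_to_chainE xs : B_perm S B xs ->
  perm_to_chain xs = [seq prefix xs (2 * i) | i <- iota 0 k.+1].
Proof. by move=> xsB; rewrite /perm_to_chain (Bperm_size xsB) mul2n doubleK. Qed.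

Lemma nth_perm_to_chain xs i : B_perm S B xs -> i <= k ->
  nth fset0 (perm_to_chain xs) i = prefix xs (2 * i).
Proof. by move=> xsB ik; rewrite perm_to_chainE // (nth_map 0) ?size_iota ?nth_iota. Qed.

Section Alternating.
Variable xs : seq nat.
Hypotheses (xsB : B_perm S B xs) (alt : alternating xs).

Let xs_uniq := Bperm_uniq xsB.
Let xs_size := Bperm_size xsB.

(* The descent x_{2i+1} < x_{2i} leaves the maximum of the prefix unchanged,
   so the conditions at positions 2i+1 and 2i+2 chain together. *)
Lemma Bperm_pair_same_comp i : i < k ->
  same_comp B (prefix xs (2 * i).+2) (nth 0 xs (2 * i)) (nth 0 xs (2 * i).+1) /\
  same_comp B (prefix xs (2 * i).+2) (nth 0 xs (2 * i).+1) (smax (prefix xs (2 * i).+2)).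
Proof.
move=> ik; have ixs : (2 * i).+1 < size xs by rewrite xs_size; lia.
have [_ compB] := xsB.
have c1 : same_comp B (prefix xs (2 * i).+1) (nth 0 xs (2 * i)) (smax (take (2 * i).+1 xs)).
  by apply: compB; rewrite xs_size; lia.
have c2 : same_comp B (prefix xs (2 * i).+2) (nth 0 xs (2 * i).+1) (smax (take (2 * i).+2 xs)).
  by apply: compB; rewrite xs_size; lia.
have maxE : smax (take (2 * i).+2 xs) = smax (take (2 * i).+1 xs).
  rewrite (take_nth 0 ixs) (@eq_smax _ (nth 0 xs (2 * i).+1 :: take (2 * i).+1 xs)).
    rewrite smax_cons; apply/maxn_idPr/ltnW/(leq_trans (alternating_desc alt ixs)).
    by apply: leq_smax; rewrite (take_nth 0 (ltnW ixs)) mem_rcons mem_head.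
  by move=> z; rewrite mem_rcons.
rewrite -smax_prefix in c2; split=> //.
apply: (same_comp_trans hB _ (same_comp_sym c2)).
rewrite smax_prefix maxE; apply: same_comp_subset c1.
exact: prefix_subset.
Qed.

Lemma prefix_Phat i : i <= k -> Phat S B (prefix xs (2 * i)).
Proof.
elim: i => [|i IH] ik; first by rewrite muln0 prefix0 Phat_fset0.
have ixs : (2 * i).+1 < size xs by rewrite xs_size; lia.
have [same_ab _] := Bperm_pair_same_comp ik.
have YS := Bperm_prefix_subset (2 * i).+2 xsB.
rewrite mul2nS; rewrite prefixSS // in same_ab YS *.
rewrite Phat_add2 ?IH ?nth_notin_prefix ?(ltnW ik) ?(ltnW ixs) //.
by rewrite neq_ltn alternating_desc ?orbT.
Qed.

Lemma prefix_mu j : j < k -> mu B (prefix xs (2 * j)) (prefix xs (2 * j).+2) =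
  (smax (prefix xs (2 * j).+2), (nth 0 xs (2 * j), nth 0 xs (2 * j).+1)).
Proof.
move=> jk; have jxs : (2 * j).+1 < size xs by rewrite xs_size; lia.
have [/same_compP[C CY /andP[aC bC]] /same_compP[C' C'Y /andP[bC' maxC']]] :=
  Bperm_pair_same_comp jk.
rewrite (comps_eq hB C'Y CY bC' bC) in maxC'.
rewrite (mu_eq hB CY (mem_prefix_fsetD2 xs_uniq jxs) (alternating_desc alt jxs) aC bC).
have [_ CsubY _] := compsP CY.
by congr (_, _); apply/eqP; rewrite eqn_leq smax_subset // leq_smax.
Qed.

End Alternating.

Lemma size_perm_to_chain xs : B_perm S B xs -> size (perm_to_chain xs) = k.+1.
Proof. by move=> xsB; rewrite perm_to_chainE // size_map size_iota. Qed.

Lemma perm_to_chain_max_chain xs : B_perm S B xs -> alternating xs ->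
  max_chain S B (perm_to_chain xs).
Proof.
move=> xsB alt; rewrite perm_to_chainE //; split; last split.
- by apply/allP => Y /mapP[i]; rewrite mem_iota => /andP[_ ik] ->; apply: prefix_Phat.
- rewrite sorted_map; apply: (@sub_in_sorted _ [pred i | i <= k] ltn); last first.
  + exact: iota_ltn_sorted.
  + by apply/allP => i; rewrite mem_iota.
  move=> i j ik jk ij /=; apply: prefix_proper (Bperm_uniq xsB) _ _ => //.
    by rewrite ltn_pmul2l.
  by rewrite (Bperm_size xsB) leq_pmul2l.
move=> X PX /allP comparableX.
have /PhatP[XS _] := PX; set j := #|` X|./2.
have cardX : #|` X| = 2 * j by rewrite mul2n -[LHS]odd_double_half (negbTE (Phat_even hB PX)).
have jk : j <= k by have := fsubset_leq_card XS; rewrite hk cardX; lia.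
have prefix_in : prefix xs (2 * j) \in [seq prefix xs (2 * i) | i <- iota 0 k.+1].
  by apply: (map_f (fun i => prefix xs (2 * i))); rewrite mem_iota.
rewrite (fsubset_comparable_eq (comparableX _ prefix_in)) // cardX card_prefix ?Bperm_uniq //.
by rewrite (Bperm_size xsB); lia.
Qed.

Lemma perm_to_chain_no_decreasing xs : B_perm S B xs -> alternating xs ->
  no_decreasing B (perm_to_chain xs).
Proof.
move=> xsB alt [//|j] _; rewrite size_perm_to_chain // ltnS => jk.
rewrite !nth_perm_to_chain //; try lia.
have xs_size := Bperm_size xsB.
have m1 := prefix_mu xsB alt (ltnW jk); have m2 := prefix_mu xsB alt jk.
rewrite -!mul2nS in m1 m2; rewrite /= m1 m2.
apply: gtZOm_ascent.
- by apply/smax_subset/prefix_subset; lia.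
- by rewrite mul2nS; apply: alternating_asc => //; rewrite xs_size; lia.
- rewrite nth_uniq ?Bperm_uniq ?xs_size //; lia.
Qed.

Lemma perm_to_chain_inj xs ys : B_perm S B xs -> alternating xs ->
  B_perm S B ys -> alternating ys -> perm_to_chain xs = perm_to_chain ys -> xs = ys.
Proof.
move=> xsB xs_alt ysB ys_alt chain_xy.
have [xs_size ys_size] := (Bperm_size xsB, Bperm_size ysB).
apply: (@eq_from_nth _ 0) => [|j]; first by rewrite xs_size ys_size.
rewrite xs_size => jk; set i := j./2.
have ixs : (2 * i).+1 < size xs by rewrite xs_size /i; lia.
have iys : (2 * i).+1 < size ys by rewrite ys_size /i; lia.
have prefix_xy l : l <= k -> prefix xs (2 * l) = prefix ys (2 * l).
  by move=> lk; rewrite -!nth_perm_to_chain ?chain_xy.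
have [x0 x1] := nth_prefix_fsetD2 (Bperm_uniq xsB) xs_alt ixs.
have [y0 y1] := nth_prefix_fsetD2 (Bperm_uniq ysB) ys_alt iys.
rewrite -mul2nS !prefix_xy /i in x0 x1 y0 y1; try lia.
rewrite -[j]odd_double_half -mul2n; case: (odd j) => /=.
  by rewrite x1 y1.
by rewrite x0 y0.
Qed.

End Forward.

Section Surjection.
Variables (S : {fset nat}) (B : {fset {fset nat}}) (k : nat).
Hypothesis hB : building_set S B.
Hypothesis hc : chordal B.
Hypothesis hk : #|` S| = 2 * k.
Hypothesis hSev : forall C, C \in comps B S -> ~~ odd #|` C|.
Variable c : seq {fset nat}.
Hypothesis hmc : max_chain S B c.
Hypothesis hnd : no_decreasing B c.

Local Notation I i := (nth fset0 c i).

Lemma chain_Phat i : i < size c -> Phat S B (I i).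
Proof. by case: hmc => /allP PC _ ic; apply/PC/mem_nth. Qed.

Lemma chain_subset_S i : i < size c -> I i `<=` S.
Proof. by move=> /chain_Phat /PhatP[]. Qed.

Lemma chain_proper i j : i < j -> j < size c -> I i `<` I j.
Proof.
move=> ij jc; case: hmc => _ [sorted_c _].
have tr : transitive (fun X Y : {fset nat} => X `<` Y).
  by move=> Y X Z XY YZ; apply: fproper_sub_trans XY (fproper_sub YZ).
by apply: (sorted_ltn_nth tr fset0 sorted_c); rewrite ?inE // (ltn_trans ij).
Qed.

Lemma chain_subset i j : i <= j -> j < size c -> I i `<=` I j.
Proof.
rewrite leq_eqVlt => /orP[/eqP-> //|ij] jc.
exact: fproper_sub (chain_proper ij jc).
Qed.

Lemma chain_maximal X : Phat S B X -> (forall Y, Y \in c -> (X `<=` Y) || (Y `<=` X)) -> X \in c.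
Proof. by case: hmc => _ [_ maxc] PX comparableX; apply: maxc => //; apply/allP. Qed.

Lemma chain_head : 0 < size c /\ I 0 = fset0.
Proof.
have c0 : fset0 \in c by apply: chain_maximal (Phat_fset0 hB) _ => Y _; rewrite fsub0set.
split; first by case: c c0.
have := nth_index fset0 c0; have := index_mem fset0 c; rewrite c0.
case: (index fset0 c) => [_ -> //|i ic I0].
by have := fproper_ltn_card (chain_proper (ltn0Sn i) ic); rewrite I0 cardfs0.
Qed.

Lemma chain_last : I (size c).-1 = S.
Proof.
have cS : S \in c.
  apply: chain_maximal; first by apply/PhatP.
  by move=> Y /(nthP fset0)[i ic <-]; rewrite chain_subset_S ?orbT.
have [c0 _] := chain_head; have last_c : (size c).-1 < size c by rewrite prednK.
have := nth_index fset0 cS; have : index S c <= (size c).-1 by rewrite -ltnS prednK ?index_mem.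
rewrite leq_eqVlt => /orP[/eqP <- -> //|lt_last IS].
have := fproper_ltn_card (chain_proper lt_last last_c); rewrite IS ltnNge.
by rewrite fsubset_leq_card ?chain_subset_S.
Qed.

Lemma chain_cover i : i.+1 < size c ->
  ~ exists Y, [/\ Phat S B Y, I i `<` Y & Y `<` I i.+1].
Proof.
move=> ic [Y [PY IY YI]].
have /(nthP fset0)[j jc IjY] : Y \in c.
  apply: chain_maximal => // Z /(nthP fset0)[j jc <-].
  have [ji|ij] := leqP j i.
    by rewrite (fsubset_trans (chain_subset ji (ltnW ic)) (fproper_sub IY)) orbT.
  by rewrite (fsubset_trans (fproper_sub YI) (chain_subset ij jc)).
rewrite -IjY in IY YI; have [ji|ij] := leqP j i.
  by have := fproper_sub_trans IY (chain_subset ji (ltnW ic)); rewrite (negbTE (fproper_irrefl _)).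
by have := fproper_sub_trans YI (chain_subset ij jc); rewrite (negbTE (fproper_irrefl _)).
Qed.

Lemma chain_card i : i < size c -> #|` I i| = 2 * i.
Proof.
elim: i => [|i IH] ic; first by have [_ ->] := chain_head; rewrite cardfs0.
have [Pi Pi1] := (chain_Phat (ltnW ic), chain_Phat ic).
have lt_i := chain_proper (ltnSn i) ic.
have cardi := IH (ltnW ic); have := fproper_ltn_card lt_i; rewrite cardi.
have [j cardj] : exists j, #|` I i.+1| = 2 * j.
  by exists #|` I i.+1|./2; rewrite mul2n -[LHS]odd_double_half (negbTE (Phat_even hB Pi1)).
rewrite cardj => ij; have [->//|jge] : j = i.+1 \/ i.+2 <= j by lia.
exfalso; apply: (chain_cover ic); apply: (Phat_interpolate hB hc Pi Pi1 (fproper_sub lt_i)).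
by rewrite cardi cardj; lia.
Qed.

Lemma chain_size : size c = k.+1.
Proof.
have [c0 _] := chain_head; have last_c : (size c).-1 < size c by rewrite prednK.
by have := chain_card last_c; rewrite chain_last hk; lia.
Qed.

Local Notation D i := (I i.+1 `\` I i).
Local Notation a i := (smax (D i)).
Local Notation b i := (smin (D i)).

Lemma chain_step i : i < k -> [/\ b i < a i, forall x, (x \in D i) = (x == a i) || (x == b i),
  a i \notin I i, b i \notin I i & I i.+1 = I i `|` [fset a i; b i]].
Proof.
move=> ik; have ic : i.+1 < size c by rewrite chain_size.
have Ii := chain_subset (leqnSn i) ic.
have cardD : #|` D i| = 2 by rewrite cardfsDS // !chain_card ?(ltnW ic) //; lia.
have [ba Dab] := card2_smax_smin cardD.
have /fsetDP[_ aI] : a i \in D i by rewrite Dab eqxx.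
have /fsetDP[_ bI] : b i \in D i by rewrite Dab eqxx orbT.
split=> //; apply/fsetP => x; rewrite in_fsetU in_fset2 -Dab in_fsetD.
by have [/(fsubsetP Ii)|] := boolP (x \in I i).
Qed.

Lemma chain_same_comp i : i < k -> same_comp B (I i.+1) (a i) (b i).
Proof.
move=> ik; have ic : i.+1 < size c by rewrite chain_size.
have [ba _ aI bI Ii1] := chain_step ik.
have ab : a i != b i by rewrite neq_ltn ba orbT.
have := Phat_add2 hB (chain_Phat (ltnW ic)) aI bI ab; rewrite -Ii1 => <-.
  exact: chain_Phat.
exact: chain_subset_S.
Qed.

Lemma chain_comp_smax i C : i < k -> C \in comps B (I i.+1) -> a i \in C ->
  smax (I i) <= smax C -> smax C = smax (I i.+1).
Proof.
move=> ik CI aC le_iC; have [ba _ _ _ Ii1] := chain_step ik; have [_ CsubI _] := compsP CI.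
apply/eqP; rewrite eqn_leq smax_subset //=.
apply: smax_leq => x; rewrite Ii1 in_fsetU in_fset2 => /orP[xI|/orP[]/eqP->].
- exact: leq_trans (leq_smax xI) le_iC.
- exact: leq_smax.
- exact: leq_trans (ltnW ba) (leq_smax aC).
Qed.

Lemma chain_mu i : i < k -> exists2 C, C \in comps B (I i.+1) &
  [/\ a i \in C, b i \in C & mu B (I i) (I i.+1) = (smax C, (a i, b i))].
Proof.
move=> ik; have [ba Dab _ _ _] := chain_step ik.
have /same_compP[C CI /andP[aC bC]] := chain_same_comp ik.
by exists C; rewrite // (mu_eq hB CI Dab ba aC bC).
Qed.

Lemma chain_comp_max i : i < k -> exists2 C, C \in comps B (I i.+1) &
  [/\ a i \in C, b i \in C, mu B (I i) (I i.+1) = (smax C, (a i, b i)) & smax C = smax (I i.+1)].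
Proof.
elim: i => [|i IH] ik; have [C CI [aC bC muC]] := chain_mu ik;
  exists C => //; split=> //; apply: chain_comp_smax => //.
  by have [_ ->] := chain_head; apply: smax_leq => x; rewrite in_fset0.
have [C0 _ [_ _ muC0 maxC0]] := IH (ltnW ik); rewrite -maxC0.
have ic : i.+2 < size c by rewrite chain_size.
have := hnd (ltn0Sn i) ic; rewrite /= muC0 muC /gtZOm /geZOm /= => no_desc.
rewrite leqNgt; apply: contra no_desc => lt; rewrite lt /=.
by apply/eqP => -[eq0 _ _]; move: lt; rewrite eq0 ltnn.
Qed.

Lemma chain_smax_stable i : i < k -> a i <= smax (I i) -> smax (I i.+1) = smax (I i).
Proof.
move=> ik aM; have ic : i.+1 < size c by rewrite chain_size.
have [ba _ _ _ Ii1] := chain_step ik.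
apply/eqP; rewrite eqn_leq andbC smax_subset ?chain_subset //=.
apply: smax_leq => x; rewrite Ii1 in_fsetU in_fset2 => /orP[xI|/orP[]/eqP->] //.
- exact: leq_smax.
- exact: leq_trans (ltnW ba) aM.
Qed.

Lemma chain_alternates i : i.+1 < k -> b i < a i.+1.
Proof.
move=> ik; have ic : i.+2 < size c by rewrite chain_size.
have [C0 _ [_ _ muC0 maxC0]] := chain_comp_max (ltnW ik).
have [C _ [_ _ muC maxC]] := chain_comp_max ik.
have [ba0 Dab0 _ _ _] := chain_step (ltnW ik).
have [ba _ aI _ _] := chain_step ik.
have /fsetDP[bI _] : b i \in D i by rewrite Dab0 eqxx orbT.
have /fsetDP[a0I _] : a i \in D i by rewrite Dab0 eqxx.
set M := smax (I i.+1).
have [ltM|] := ltnP M (a i.+1); first exact: leq_ltn_trans (leq_smax bI) ltM.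
rewrite leq_eqVlt => /orP[/eqP aM|ltaM].
  by move: aI; rewrite aM smax_mem ?(enum_fset_neq0 bI).
have maxM : smax (I i.+2) = M := chain_smax_stable ik (ltnW ltaM).
rewrite ltnNge; apply/negP => ab.
have := hnd (ltn0Sn i) ic; rewrite /= muC0 muC maxC0 maxC maxM.
rewrite /gtZOm /geZOm /ge_Om /= ltnn eqxx (ltnW ba0) ab (ltnW ba) /=.
by apply/negP; rewrite negbK; apply/eqP => -[a0a _]; move: aI; rewrite -a0a a0I.
Qed.

Lemma chain_even_same_comp i : i < k -> same_comp B (I i.+1) (b i) (smax (I i.+1)).
Proof.
move=> ik; have [C CI [aC bC _ <-]] := chain_comp_max ik.
by apply/same_compP; exists C; rewrite // bC smax_mem ?(enum_fset_neq0 aC).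
Qed.

Lemma chain_odd_same_comp i : i < k ->
  same_comp B (I i `|` [fset a i]) (a i) (maxn (a i) (smax (I i))).
Proof.
move=> ik; have ic : i.+1 < size c by rewrite chain_size.
have [ba Dab _ _ _] := chain_step ik.
have /fsetDP[aI _] : a i \in D i by rewrite Dab eqxx.
have aJ : a i \in I i `|` [fset a i] by rewrite in_fsetU in_fset1 eqxx orbT.
have JI : I i `|` [fset a i] `<=` I i.+1.
  by rewrite fsubUset fsub1set aI chain_subset.
have [_|aM] := leqP (smax (I i)) (a i).
  have [C CJ aC] := comps_mem hB (fsubset_trans JI (chain_subset_S ic)) aJ.
  by apply/same_compP; exists C; rewrite ?aC.
set M := smax (I i).
have [C CI [aC bC _ maxC]] := chain_comp_max ik; have [CB CsubI _] := compsP CI.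
have maxI : smax (I i.+1) = M by apply/chain_smax_stable/ltnW.
have MC : M \in C by rewrite -maxI -maxC smax_mem ?(enum_fset_neq0 aC).
have TB : [fset x in C | b i < x] \in B.
  apply: chordal_tail => //; first by exists (b i).
  by exists (a i), M; split=> //; [rewrite neq_ltn aM | exact: ltn_trans aM].
apply: (same_comp_of_mem TB); rewrite ?inE ?aC ?MC ?ba ?(ltn_trans ba aM) //.
apply/fsubsetP => x; rewrite !inE => /andP[xC bx].
have [//|xI] /= := boolP (x \in I i).
have : x \in D i by rewrite in_fsetD xI (fsubsetP CsubI x xC).
by rewrite Dab => /orP[//|/eqP xb]; move: bx; rewrite xb ltnn.
Qed.

Definition chain_to_perm := mkseq (fun j => if odd j then b j./2 else a j./2) (2 * k).

Lemma size_chain_to_perm : size chain_to_perm = 2 * k.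
Proof. exact: size_mkseq. Qed.

Lemma nth_chain_to_perm_even i : i < k -> nth 0 chain_to_perm (2 * i) = a i.
Proof. by move=> ik; rewrite nth_mkseq ?oddM ?mul2n ?doubleK //; lia. Qed.

Lemma nth_chain_to_perm_odd i : i < k -> nth 0 chain_to_perm (2 * i).+1 = b i.
Proof. by move=> ik; rewrite nth_mkseq /= ?oddM ?mul2n ?uphalf_double //; lia. Qed.

Lemma prefix_chain_to_perm i : i <= k -> prefix chain_to_perm (2 * i) = I i.
Proof.
elim: i => [|i IH] ik; first by have [_ ->] := chain_head; rewrite prefix0.
have [_ _ _ _ ->] := chain_step ik.
rewrite mul2nS prefixSS ?size_chain_to_perm; last lia.
by rewrite IH ?(ltnW ik) // nth_chain_to_perm_even // nth_chain_to_perm_odd.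
Qed.

Lemma chain_to_permK : perm_to_chain chain_to_perm = c.
Proof.
have size_c : size (perm_to_chain chain_to_perm) = size c.
  by rewrite size_map size_iota size_chain_to_perm mul2n doubleK chain_size.
apply: (@eq_from_nth _ fset0) => // i; rewrite size_c chain_size => ik.
rewrite (nth_map 0) ?size_iota ?size_chain_to_perm ?mul2n ?doubleK // nth_iota //.
by rewrite add0n -mul2n; exact: prefix_chain_to_perm.
Qed.

Lemma perm_eq_chain_to_perm : perm_eq chain_to_perm S.
Proof.
have prefixS : [fset x in chain_to_perm] = S.
  have := prefix_chain_to_perm (leqnn k); rewrite -size_chain_to_perm /prefix take_size => ->.
  by have := chain_last; rewrite chain_size.
have xs_uniq : uniq chain_to_perm.
  have := card_fseq chain_to_perm; rewrite prefixS hk -size_chain_to_perm => card_undup.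
  by apply/negPn/negP; rewrite -ltn_size_undup -card_undup ltnn.
apply: uniq_perm => // [|x]; first exact: fset_uniq.
by rewrite -prefixS inE.
Qed.

Lemma alternating_chain_to_perm : alternating chain_to_perm.
Proof.
move=> j; rewrite size_chain_to_perm -[j]odd_double_half -mul2n.
case: (odd j); rewrite ?add1n ?add0n /= oddM /= => jk.
  rewrite nth_chain_to_perm_odd -?mul2nS ?nth_chain_to_perm_even; try lia.
  by apply: chain_alternates; lia.
rewrite nth_chain_to_perm_even ?nth_chain_to_perm_odd; try lia.
by have [] := chain_step (_ : j./2 < k); lia.
Qed.

Lemma Bperm_chain_to_perm : B_perm S B chain_to_perm.
Proof.
split; first exact: perm_eq_chain_to_perm.
move=> j; rewrite size_chain_to_perm -[j]odd_double_half -mul2n.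
case: (odd j) (j./2) => [] i; rewrite ?add1n ?add0n => /andP[i0 ik] /=.
  rewrite -/(prefix chain_to_perm (2 * i).+1) -smax_prefix prefixS ?size_chain_to_perm //.
  rewrite prefix_chain_to_perm ?nth_chain_to_perm_even; try lia.
  have -> : smax (I i `|` [fset a i]) = maxn (a i) (smax (I i)).
    by rewrite -smax_cons; apply: eq_smax => x; rewrite !inE orbC.
  by apply: chain_odd_same_comp; lia.
case: i => [//|i] in i0 ik *; have {i0}ik : i < k by lia.
rewrite -/(prefix chain_to_perm (2 * i.+1)) -smax_prefix prefix_chain_to_perm //.
by rewrite mul2nS /= nth_chain_to_perm_odd //; apply: chain_even_same_comp.
Qed.

End Surjection.

Theorem lemma4p3 (S : {fset nat}) (B : {fset {fset nat}}) (k : nat) :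
  building_set S B -> chordal B -> #|` S| = 2 * k ->
  (forall C, C \in comps B S -> ~~ odd #|` C|) ->
  (forall xs, B_perm S B xs -> alternating xs ->
     max_chain S B (perm_to_chain xs) /\ no_decreasing B (perm_to_chain xs)) /\
  (forall xs ys, B_perm S B xs -> alternating xs -> B_perm S B ys -> alternating ys ->
     perm_to_chain xs = perm_to_chain ys -> xs = ys) /\
  (forall c, max_chain S B c -> no_decreasing B c ->
     exists xs, [/\ B_perm S B xs, alternating xs & perm_to_chain xs = c]).
Proof.
move=> hB hc hk hSev; split; last split.
- move=> xs xsB alt; split.
    exact: (perm_to_chain_max_chain hB hk xsB alt).
  exact: (perm_to_chain_no_decreasing hB hk xsB alt).
- exact: (perm_to_chain_inj hk).
- move=> c hmc hnd; exists (chain_to_perm k c); split.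
  + exact: (Bperm_chain_to_perm hB hc hk hSev hmc hnd).
  + exact: (alternating_chain_to_perm hB hc hk hSev hmc hnd).
  + exact: (chain_to_permK hB hc hk hSev hmc).
Qed.
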